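(* Let $\mathbb F$ be an algebraically closed field, and let $p_1,\dots,p_m\in\mathbb F[x]$ be polynomials such that $\{1,p_1,\dots,p_m\}$ is linearly independent over $\mathbb F$. Then the polynomial map $L:\mathbb F\to\mathbb F^m$, $x\mapsto(p_1(x),\dots,p_m(x))$, is $(m-1,1)$-elusive. In particular the moment curve $x\mapsto(x,x^2,\dots,x^m)$ is $(m-1,1)$-elusive.
   Context: A polynomial map $M=(M_1,\dots,M_m)$ has degree $d$ if each $M_i$ has degree at most $d$. $L:\mathbb F^n\to\mathbb F^m$ is $(r,d)$-elusive if for every polynomial map $M:\mathbb F^r\to\mathbb F^m$ of degree $d$, $\mathrm{im}(L)\not\subseteq\mathrm{im}(M)$. *)

From HB Require Import structures.
From mathcomp Require Import all_boot all_order all_algebra.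
Set Implicit Arguments. Unset Strict Implicit. Unset Printing Implicit Defensive.
Import Order.TTheory GRing.Theory.
Local Open Scope ring_scope.

Definition multiindex (r d : nat) := {ffun 'I_r -> 'I_d.+1}.

Definition mdeg (r d : nat) (a : multiindex r d) : nat := (\sum_i (a i : nat))%N.

Definition polyfun_deg (F : nzRingType) (r d : nat) (f : 'rV[F]_r -> F) : Prop :=
  exists c : multiindex r d -> F,
    forall y : 'rV[F]_r,
      f y = \sum_(a : multiindex r d | (mdeg a <= d)%N) c a * \prod_i (y 0 i) ^+ (a i).

Definition polymap_deg (F : nzRingType) (r m d : nat) (M : 'rV[F]_r -> 'rV[F]_m) : Prop :=
  forall j : 'I_m, polyfun_deg d (fun y => M y 0 j).

Definition elusive (F : nzRingType) (n m r d : nat) (L : 'rV[F]_n -> 'rV[F]_m) : Prop :=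
  forall M : 'rV[F]_r -> 'rV[F]_m, polymap_deg d M ->
    ~ (forall x : 'rV[F]_n, exists y : 'rV[F]_r, L x = M y).

Definition one_polys_lin_indep (F : fieldType) (m : nat) (p : 'I_m -> {poly F}) : Prop :=
  forall (c0 : F) (c : 'I_m -> F),
    c0%:P + \sum_(j < m) c j *: p j = 0 -> c0 = 0 /\ (forall j, c j = 0).

Definition polycurve (F : nzRingType) (m : nat) (p : 'I_m -> {poly F}) : 'rV[F]_1 -> 'rV[F]_m :=
  fun x => \row_(j < m) (p j).[x 0 0].

Definition moment_curve (F : nzRingType) (m : nat) : 'rV[F]_1 -> 'rV[F]_m :=
  fun x => \row_(j < m) (x 0 0) ^+ j.+1.

From HB Require Import structures.
From mathcomp Require Import all_boot all_order all_algebra.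
Import GRing.Theory.
Local Open Scope ring_scope.

Set Implicit Arguments. Unset Strict Implicit.

(* A polynomial map M : F^r -> F^m of degree 1 is affine:
   M y = b + y A for a row vector b and an r x m matrix A.  If r < m, the
   matrix A has a nontrivial left annihilator: a nonzero u in F^m with
   A u^T = 0, so the linear functional "dot with u" is constant (= b.u) on
   the whole image of M.  If the curve x |-> (p_1(x),...,p_m(x)) lies in that
   image, the polynomial  sum_j u_j p_j - b.u  vanishes at every point of F;
   F being algebraically closed (hence infinite), it is the zero polynomial,
   and linear independence of {1, p_1, ..., p_m} forces u = 0, a
   contradiction. *)

(* A monomial of total degree at most 1 is either the constant 1 or a single
   coordinate y_k; uniformly, it is the affine form below. *)
Lemma monomial_deg1_affine (F : comNzRingType) (r : nat) (a : multiindex r 1)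
    (y : 'rV[F]_r) :
  (mdeg a <= 1)%N ->
  \prod_i y 0 i ^+ a i = (mdeg a == 0)%N%:R + \sum_i y 0 i * (a i : nat)%:R.
Proof.
rewrite /mdeg leq_eqVlt ltnS leqn0; case/orP => /eqP deg_a.
- have [k ak_neq0] : exists k, (a k : nat) != 0%N.
    apply/existsP; apply: contraT; rewrite negb_exists => /forallP a0.
    move: deg_a; rewrite (eqP (_ : \sum_i (a i : nat) == 0)%N) //.
    by rewrite sum_nat_eq0; apply/forallP => i; have := a0 i; rewrite negbK.
  have ak1 : (a k : nat) = 1%N by move: ak_neq0 (ltn_ord (a k)); case: (a k : nat) => [|[|]].
  have a_other i : i != k -> (a i : nat) = 0%N.
    move=> ik; move: deg_a; rewrite (bigD1 k) //= ak1 => /eqP.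
    rewrite -[X in _ == X]addn0 eqn_add2l sum_nat_eq0 => /forallP /(_ i).
    by rewrite ik => /eqP.
  rewrite deg_a (bigD1 k) //= ak1 big1 ?mulr1 => [|i ik]; last by rewrite a_other.
  by rewrite (bigD1 k) //= ak1 big1 ?mulr1 ?add0r ?addr0 // => i ik; rewrite a_other ?mulr0.
- have a0 i : (a i : nat) = 0%N.
    by move: deg_a => /eqP; rewrite sum_nat_eq0 => /forallP /(_ i) /eqP.
  rewrite deg_a /= big1 => [|i _]; last by rewrite a0.
  by rewrite big1 ?addr0 // => i _; rewrite a0 mulr0.
Qed.

Lemma polyfun_deg1_affine (F : comNzRingType) (r : nat) (f : 'rV[F]_r -> F) :
  polyfun_deg 1 f -> exists (c : F) (v : 'rV[F]_r),
    forall y, f y = c + \sum_i y 0 i * v 0 i.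
Proof.
case=> coef f_eq.
exists (\sum_(a : multiindex r 1 | (mdeg a <= 1)%N) coef a * (mdeg a == 0)%N%:R).
exists (\row_i \sum_(a : multiindex r 1 | (mdeg a <= 1)%N) coef a * (a i : nat)%:R).
move=> y; rewrite f_eq.
under eq_bigr => a deg_a do rewrite monomial_deg1_affine // mulrDr mulr_sumr.
rewrite big_split /=; congr (_ + _); rewrite exchange_big /=.
by apply: eq_bigr => i _; rewrite mxE mulr_sumr; apply: eq_bigr => a _; rewrite mulrCA.
Qed.

Lemma polymap_deg1_affine (F : comNzRingType) (r m : nat)
    (M : 'rV[F]_r -> 'rV[F]_m) :
  polymap_deg 1 M -> exists (b : 'rV[F]_m) (A : 'M[F]_(r, m)),
    forall y, M y = b + y *m A.
Proof.
move=> M_deg1.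
have [c c_eq] := fin_all_exists (fun j => polyfun_deg1_affine (M_deg1 j)).
have [v v_eq] := fin_all_exists c_eq.
exists (\row_j c j); exists (\matrix_(i, j) v j 0 i).
move=> y; apply/rowP => j; rewrite !mxE v_eq; congr (_ + _).
by apply: eq_bigr => i _; rewrite !mxE.
Qed.

Lemma wide_matrix_annihilator (F : fieldType) (r m : nat) (A : 'M[F]_(r, m)) :
  (r < m)%N -> exists2 u : 'rV[F]_m, u != 0 & A *m u^T = 0.
Proof.
move=> r_lt_m.
have ker_neq0 : kermx A^T != 0.
  rewrite -mxrank_eq0 mxrank_ker subn_eq0 -ltnNge.
  exact: leq_ltn_trans (rank_leq_col A^T) r_lt_m.
have [u /sub_kermxP uA u_neq0] := rowV0Pn ker_neq0.
by exists u => //; rewrite -[A]trmxK -trmx_mul uA trmx0.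
Qed.

(* Over an algebraically closed field, a polynomial vanishing everywhere is
   zero (such a field is infinite). *)
Lemma poly_vanishing_everywhere (F : closedFieldType) (q : {poly F}) :
  (forall x, q.[x] = 0) -> q = 0.
Proof.
move=> q_vanish; apply/eqP; apply: contraT => /closed_nonrootP [x].
by rewrite /root q_vanish eqxx.
Qed.

Lemma deg1_image_in_hyperplane (F : fieldType) (r m : nat)
    (M : 'rV[F]_r -> 'rV[F]_m) :
  (r < m)%N -> polymap_deg 1 M ->
  exists2 u : 'rV[F]_m, u != 0 & exists c : F, forall y, (M y *m u^T) 0 0 = c.
Proof.
move=> r_lt_m /polymap_deg1_affine [b [A M_eq]].
have [u u_neq0 Au] := wide_matrix_annihilator A r_lt_m.
exists u => //; exists ((b *m u^T) 0 0) => y.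
by rewrite M_eq mulmxDl -mulmxA Au mulmx0 addr0.
Qed.

Lemma polycurve_pairing (F : comNzRingType) (m : nat) (p : 'I_m -> {poly F})
    (u : 'rV[F]_m) (x : 'rV[F]_1) :
  (polycurve p x *m u^T) 0 0 = (\sum_j u 0 j *: p j).[x 0 0].
Proof.
rewrite !mxE horner_sum; apply: eq_bigr => j _.
by rewrite !mxE hornerZ mulrC.
Qed.

Lemma polycurve_elusive (F : closedFieldType) (m r : nat)
    (p : 'I_m -> {poly F}) :
  (r < m)%N -> one_polys_lin_indep p -> elusive r 1 (polycurve p).
Proof.
move=> r_lt_m p_indep M M_deg1 curve_in_im.
have [u u_neq0 [c u_const]] := deg1_image_in_hyperplane r_lt_m M_deg1.
have comb_const : \sum_j u 0 j *: p j - c%:P = 0.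
  apply: poly_vanishing_everywhere => x.
  have [y curve_x] := curve_in_im (const_mx x).
  have := u_const y; rewrite -curve_x polycurve_pairing mxE.
  by rewrite hornerD hornerN hornerC => ->; rewrite subrr.
have [_ u0] : - c = 0 /\ forall j, u 0 j = 0.
  by apply: p_indep; rewrite polyCN addrC.
by case/eqP: u_neq0; apply/rowP => j; rewrite u0 mxE.
Qed.

(* The monomials x, x^2, ..., x^m together with 1 are linearly independent:
   compare the coefficients of 1 and of each x^(j+1). *)
Lemma monomials_lin_indep (F : fieldType) (m : nat) :
  one_polys_lin_indep (fun j : 'I_m => ('X^(j.+1) : {poly F})).
Proof.
move=> c0 c comb0; split.
  have := congr1 (fun q : {poly F} => q`_0) comb0.
  rewrite coefD coefC coef_sum coef0 /= big1 ?addr0 // => j _.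
  by rewrite coefZ coefXn mulr0.
move=> j; have := congr1 (fun q : {poly F} => q`_j.+1) comb0.
rewrite coefD coefC coef_sum coef0 /= add0r (bigD1 j) //= big1 ?addr0.
  by rewrite coefZ coefXn eqxx mulr1.
by move=> k kj; rewrite coefZ coefXn eqSS val_eqE eq_sym (negbTE kj) mulr0.
Qed.

Lemma moment_curveE (F : comNzRingType) (m : nat) (x : 'rV[F]_1) :
  moment_curve m x = polycurve (fun j : 'I_m => 'X^(j.+1)) x.
Proof. by apply/rowP => j; rewrite !mxE hornerXn. Qed.

Theorem proposition9p5 (F : closedFieldType) (m : nat) (hm : (0 < m)%N) :
  (forall p : 'I_m -> {poly F},
      one_polys_lin_indep p -> elusive (m.-1) 1 (polycurve p))
  /\ elusive (m.-1) 1 (@moment_curve F m).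
Proof.
have pred_lt_m : (m.-1 < m)%N by rewrite prednK.
split=> [p p_indep|]; first exact: polycurve_elusive.
move=> M M_deg1 moment_in_im.
apply: (polycurve_elusive pred_lt_m (@monomials_lin_indep F m) M_deg1) => x.
by rewrite -moment_curveE.
Qed.
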